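(* Let $n>0$ be a real number and let $\lambda=(\lambda_1,\dots,\lambda_\ell)$ and $\mu=(\mu_1,\dots,\mu_{\ell'})$ be finite weakly decreasing sequences of positive real numbers, each summing to $n$. If the multisets $\{\!\{\lambda_i\lambda_j : 1\le i<j\le \ell\}\!\}$ and $\{\!\{\mu_i\mu_j : 1\le i<j\le \ell'\}\!\}$ are equal, then $\lambda=\mu$ (that is, $\ell=\ell'$ and $\lambda_i=\mu_i$ for all $i$).
   Context: Multisets are compared with multiplicities. *)

From HB Require Import structures.
From mathcomp Require Import all_boot all_order all_algebra.
From mathcomp Require Import reals.
Set Implicit Arguments. Unset Strict Implicit. Unset Printing Implicit Defensive.
Import Order.TTheory GRing.Theory Num.Theory.
Local Open Scope ring_scope.

(* The list (multiset, up to perm_eq) of products s_i * s_j over index pairs i < j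
   (0-based indices into s). *)
Definition pair_products (R : realType) (s : seq R) : seq R :=
  [seq s`_(p.1) * s`_(p.2)
  | p <- [seq (i, j) | i <- iota 0 (size s), j <- iota 0 (size s)] & (p.1 < p.2)%N].

(* Write p_N(s) for the sum of the N-th powers of the entries of s. Squaring gives
   p_N^2 = p_{2N} + 2 * (sum of the N-th powers of the pair products), so the multiset of
   pair products together with p_1 = n determines every p_{2^k}. These power sums in turn
   determine a positive decreasing sequence: if the first parts satisfied b < a, then for
   large N the single term a^N would exceed (length) * b^N, an upper bound for p_N of the
   sequence headed by b. So the first parts agree, and one cancels them and recurses. *)

From mathcomp Require Import all_boot all_order all_algebra.
From mathcomp Require Import reals lra.
Import Order.TTheory GRing.Theory Num.Theory.
Set Implicit Arguments. Unset Strict Implicit. Unset Printing Implicit Defensive.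
Local Open Scope ring_scope.

Definition power_sum (R : pzSemiRingType) (s : seq R) (N : nat) : R :=
  \sum_(x <- s) x ^+ N.

Lemma sqr_sum_ord (R : comPzSemiRingType) (m : nat) (F : 'I_m -> R) :
  (\sum_(i < m) F i) ^+ 2 =
  \sum_(i < m) F i ^+ 2 + (\sum_(i < m) \sum_(j < m | (i < j)%N) F i * F j) *+ 2.
Proof.
pose U (i j : 'I_m) := if (i < j)%N then F i * F j else 0.
have split_prod i j : F i * F j = U i j + U j i + (if i == j then F i ^+ 2 else 0).
  rewrite /U; case: ltngtP => [lt_ij | lt_ji | /val_inj->].
  - by rewrite -val_eqE (ltn_eqF lt_ij) !addr0.
  - by rewrite -val_eqE (gtn_eqF lt_ji) add0r !addr0 mulrC.
  - by rewrite eqxx !add0r expr2.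
have diag i : \sum_(j < m) (if i == j then F i ^+ 2 else 0) = F i ^+ 2.
  by rewrite -big_mkcond (big_pred1 i) // => j; rewrite eq_sym.
have upper : \sum_(i < m) \sum_(j < m) U i j =
             \sum_(i < m) \sum_(j < m | (i < j)%N) F i * F j.
  by apply: eq_bigr => i _; rewrite [RHS]big_mkcond.
rewrite expr2 big_distrl /=.
under eq_bigr => i _ do rewrite big_distrr /=.
under eq_bigr => i _ do under eq_bigr => j _ do rewrite split_prod.
under eq_bigr => i _ do rewrite !big_split /= diag.
rewrite !big_split /= [X in _ + X + _]exchange_big upper.
by rewrite addrC mulr2n addrA.
Qed.

Lemma big_pair_products (R : realType) (S : nmodType) (s : seq R) (f : R -> S) :
  \sum_(x <- pair_products s) f x =
  \sum_(i < size s) \sum_(j < size s | (i < j)%N) f (s`_i * s`_j).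
Proof.
have iotaE : iota 0 (size s) = index_iota 0 (size s) by rewrite /index_iota subn0.
rewrite /pair_products big_map big_filter big_mkcond big_allpairs iotaE big_mkord.
by apply: eq_bigr => i _; rewrite big_mkord [RHS]big_mkcond.
Qed.

Lemma power_sum_ord (R : pzSemiRingType) (s : seq R) (N : nat) :
  power_sum s N = \sum_(i < size s) s`_i ^+ N.
Proof. by rewrite /power_sum (big_nth 0) big_mkord. Qed.

Lemma sqr_power_sum (R : realType) (s : seq R) (N : nat) :
  power_sum s N ^+ 2 =
  power_sum s (N * 2) + (\sum_(x <- pair_products s) x ^+ N) *+ 2.
Proof.
rewrite !power_sum_ord big_pair_products sqr_sum_ord.
congr (_ + _ *+ 2); first by apply: eq_bigr => i _; rewrite exprM.
by apply: eq_bigr => i _; apply: eq_bigr => j _; rewrite exprMn.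
Qed.

Lemma expr_le_power_sum_cons (R : numDomainType) (a : R) (s : seq R) (N : nat) :
  {in s, forall x, 0 <= x} -> a ^+ N <= power_sum (a :: s) N.
Proof.
move=> s_ge0; rewrite /power_sum big_cons lerDl big_seq.
by apply: sumr_ge0 => x /s_ge0 x_ge0; rewrite exprn_ge0.
Qed.

Lemma power_sum_le_size (R : numDomainType) (b : R) (s : seq R) (N : nat) :
  {in s, forall x, 0 <= x <= b} -> power_sum s N <= b ^+ N *+ size s.
Proof.
move=> s_bnd; rewrite -[size s]count_predT -iter_addr_0 -big_const_seq.
rewrite /power_sum big_seq [leRHS]big_seq; apply: ler_sum => x /s_bnd /andP[x_ge0 x_le_b].
by rewrite lerXn2r // nnegrE (le_trans x_ge0).
Qed.

Lemma bernoulli_ineq (R : realDomainType) (h : R) (N : nat) :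
  -1 <= h -> 1 + N%:R * h <= (1 + h) ^+ N.
Proof.
move=> h_ge; elim: N => [|N IH]; first by rewrite mul0r addr0 expr0.
have h1_ge0 : 0 <= 1 + h by lra.
rewrite exprS -natr1; apply: le_trans _ (ler_wpM2l h1_ge0 IH).
have : 0 <= N%:R * (h * h) :> R by rewrite mulr_ge0 ?ler0n ?sqr_ge0.
nra.
Qed.

Lemma natr_mul_expr_lt_eventually (R : archiRealFieldType) (m : nat) (a b : R) :
  0 < b -> b < a -> exists N0, forall N, (N0 <= N)%N -> m%:R * b ^+ N < a ^+ N.
Proof.
move=> b_gt0 b_lt_a; set h := a / b - 1.
have h_gt0 : 0 < h by rewrite subr_gt0 ltr_pdivlMr // mul1r.
exists (Num.Def.archi_bound (m%:R / h)) => N N0_le_N.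
have m_lt : m%:R < 1 + N%:R * h.
  have := archi_boundP (divr_ge0 (ler0n _ m) (ltW h_gt0)).
  rewrite ltr_pdivrMr // => /lt_le_trans; apply.
  by rewrite ler_wpDl // ler_wpM2r ?ler_nat // ltW.
have a_eq : a = (1 + h) * b by rewrite /h addrC subrK divfK ?gt_eqF.
rewrite a_eq exprMn ltr_pM2r ?exprn_gt0 //.
by apply: lt_le_trans m_lt (bernoulli_ineq _ _); rewrite ltW // (lt_trans _ h_gt0) ?ltrN10.
Qed.

Lemma le_head_of_power_sums (R : archiRealFieldType) (a b : R) (s t : seq R) :
  all (fun x => 0 < x) s -> sorted >=%R (b :: t) -> all (fun x => 0 < x) (b :: t) ->
  (forall k, power_sum (a :: s) (2 ^ k) = power_sum (b :: t) (2 ^ k)) -> a <= b.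
Proof.
move=> s_gt0 bt_sorted bt_gt0 E; rewrite leNgt; apply/negP => b_lt_a.
have b_gt0 : 0 < b by case/andP: bt_gt0.
have [N0 dom] := natr_mul_expr_lt_eventually (size (b :: t)) b_gt0 b_lt_a.
have bt_bnd : {in b :: t, forall x, 0 <= x <= b}.
  move=> x x_bt; rewrite ltW ?(allP bt_gt0) //=; move: x_bt; rewrite inE.
  by case/predU1P=> [-> // | x_t]; apply: (allP (order_path_min ge_trans bt_sorted)).
have := dom _ (ltnW (ltn_expl N0 (ltnSn 1))).
rewrite mulr_natl ltNge => /negP; apply.
rewrite (le_trans _ (power_sum_le_size _ bt_bnd)) // -E.
by apply: expr_le_power_sum_cons => x /(allP s_gt0)/ltW.
Qed.

Lemma power_sum_cons_gt0 (R : numDomainType) (b : R) (t : seq R) (N : nat) :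
  all (fun x => 0 < x) (b :: t) -> 0 < power_sum (b :: t) N.
Proof.
case/andP=> b_gt0 t_gt0; apply: lt_le_trans (exprn_gt0 N b_gt0) _.
by apply: expr_le_power_sum_cons => x /(allP t_gt0)/ltW.
Qed.

Lemma eq_of_power_sums_pow2 (R : archiRealFieldType) (s t : seq R) :
  sorted >=%R s -> sorted >=%R t -> all (fun x => 0 < x) s -> all (fun x => 0 < x) t ->
  (forall k, power_sum s (2 ^ k) = power_sum t (2 ^ k)) -> s = t.
Proof.
elim: s t => [|a s IH] [|b t] // s_sorted t_sorted s_gt0 t_gt0 E.
- by have := power_sum_cons_gt0 (2 ^ 0) t_gt0; rewrite -E /power_sum big_nil ltxx.
- by have := power_sum_cons_gt0 (2 ^ 0) s_gt0; rewrite E /power_sum big_nil ltxx.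
case/andP: (s_gt0) (t_gt0) => _ s'_gt0 /andP[_ t'_gt0].
have a_eq_b : a = b.
  apply/le_anti/andP; split; first exact: le_head_of_power_sums s'_gt0 t_sorted t_gt0 E.
  by apply: le_head_of_power_sums t'_gt0 s_sorted s_gt0 _ => k; rewrite E.
rewrite a_eq_b in E *; congr (_ :: _).
apply: IH (path_sorted s_sorted) (path_sorted t_sorted) s'_gt0 t'_gt0 _ => k.
by have := E k; rewrite /power_sum !big_cons => /addrI.
Qed.

Lemma power_sums_pow2_eq_of_pair_products (R : realType) (s t : seq R) :
  \sum_(x <- s) x = \sum_(x <- t) x ->
  perm_eq (pair_products s) (pair_products t) ->
  forall k, power_sum s (2 ^ k) = power_sum t (2 ^ k).
Proof.
move=> sum_eq pp; elim=> [|k IH]; first exact: sum_eq.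
rewrite expnSr; apply: (addIr ((\sum_(x <- pair_products s) x ^+ (2 ^ k)) *+ 2)).
by rewrite -sqr_power_sum IH (perm_big _ pp) -sqr_power_sum.
Qed.

Theorem mainTheorem4 (R : realType) (n : R) (lam mu : seq R) :
  0 < n ->
  sorted >=%R lam -> sorted >=%R mu ->
  all (fun x => 0 < x) lam -> all (fun x => 0 < x) mu ->
  \sum_(x <- lam) x = n -> \sum_(x <- mu) x = n ->
  perm_eq (pair_products lam) (pair_products mu) ->
  lam = mu.
Proof.
move=> _ lam_sorted mu_sorted lam_gt0 mu_gt0 sum_lam sum_mu pp.
apply: eq_of_power_sums_pow2 => //.
by apply: power_sums_pow2_eq_of_pair_products pp; rewrite sum_lam sum_mu.
Qed.
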